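(* Let $L$ be a finite dimensional simple Lie algebra over $\mathbb{C}$ and let $f:L\times L\to L$ be a biderivation of $L$. Then there are two linear maps $\phi,\psi:L\to L$ such that $f(x,y)=[\phi(x),y]=[x,\psi(y)]$ for all $x,y\in L$.
   Context: A biderivation of a Lie algebra $L$ is a bilinear map $f:L\times L\to L$ such that $f([x,y],z)=[x,f(y,z)]+[f(x,z),y]$ and $f(x,[y,z])=[f(x,y),z]+[y,f(x,z)]$ for all $x,y,z\in L$. *)

From HB Require Import structures.
From mathcomp Require Import all_boot all_order all_algebra.
From mathcomp Require Import complex reals.
Set Implicit Arguments. Unset Strict Implicit. Unset Printing Implicit Defensive.
Import Order.TTheory GRing.Theory Num.Theory.
Local Open Scope ring_scope.

Section Lie.
Variables (K : fieldType) (V : vectType K).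

Definition bilinear_map (f : V -> V -> V) : Prop :=
  (forall y, linear (fun x => f x y)) /\ (forall x, linear (f x)).

Definition lie_bracket (br : V -> V -> V) : Prop :=
  [/\ bilinear_map br,
      (forall x, br x x = 0) &
      (forall x y z, br x (br y z) + br y (br z x) + br z (br x y) = 0)].

Definition lie_ideal (br : V -> V -> V) (I : {vspace V}) : Prop :=
  forall x y, y \in I -> br x y \in I.

Definition simple_lie (br : V -> V -> V) : Prop :=
  lie_bracket br /\
  (exists x y, br x y != 0) /\
  (forall I : {vspace V}, lie_ideal br I -> I = 0%VS \/ I = fullv).

Definition biderivation (br : V -> V -> V) (f : V -> V -> V) : Prop :=
  [/\ bilinear_map f,
      (forall x y z, f (br x y) z = br x (f y z) + br (f x z) y) &
      (forall x y z, f x (br y z) = br (f x y) z + br y (f x z))].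
End Lie.

From HB Require Import structures.
From mathcomp Require Import all_boot all_order all_algebra.
From mathcomp Require Import complex reals.
From mathcomp Require Import ring zify.
From Stdlib Require Import ClassicalEpsilon.
Set Implicit Arguments. Unset Strict Implicit. Unset Printing Implicit Defensive.
Import GRing.Theory Num.Theory.
Local Open Scope ring_scope.

(* Write 2f = g + s with g(x,y) = f(x,y) - f(y,x) skew-symmetric and
   s(x,y) = f(x,y) + f(y,x) symmetric; both are again biderivations.
   Skew part (after Brešar and Zhao): expanding g([x,u],[y,v]) in two ways
   gives [g(x,y),[u,v]] = [[x,y],g(u,v)].  As L is simple, hence perfect and
   centerless, this defines a linear map γ by [γ z,[u,v]] = [z,g(u,v)], with
   γ[x,y] = g(x,y) and γ[a,z] = [a,γ z].  An eigenspace of γ is then a nonzero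
   ideal, so γ is a scalar λ and g = λ[·,·].
   Symmetric part: every s(x,z) lies in the ideal of those z such that
   [[z,y],[u,v]] + [[z,u],[v,y]] + [[z,v],[y,u]] = 0 for all y, u, v.  This
   ideal is not L, for otherwise [L,L] would be abelian while L = [L,L] is
   not; hence it is 0 and s = 0.  So f = (λ/2)[·,·]. *)

Section Bilinear.
Variables (K : fieldType) (V : vectType K) (B : V -> V -> V).
Hypothesis bilinB : bilinear_map B.

Lemma bilinDl x y z : B (x + y) z = B x z + B y z.
Proof. exact: (GRing.semilinear_linear (bilinB.1 z)).2. Qed.

Lemma bilinDr x y z : B z (x + y) = B z x + B z y.
Proof. exact: (GRing.semilinear_linear (bilinB.2 z)).2. Qed.

Lemma bilinZl k x z : B (k *: x) z = k *: B x z.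
Proof. exact: (GRing.scalable_linear (bilinB.1 z) k x). Qed.

Lemma bilinZr k x z : B z (k *: x) = k *: B z x.
Proof. exact: (GRing.scalable_linear (bilinB.2 z) k x). Qed.

Lemma bilinBl x y z : B (x - y) z = B x z - B y z.
Proof. exact: (GRing.zmod_morphism_linear (bilinB.1 z) x y). Qed.

Lemma bilinBr x y z : B z (x - y) = B z x - B z y.
Proof. exact: (GRing.zmod_morphism_linear (bilinB.2 z) x y). Qed.

Lemma bilin0l z : B 0 z = 0.
Proof. by rewrite -(scale0r (0 : V)) bilinZl !scale0r. Qed.

Lemma bilin0r z : B z 0 = 0.
Proof. by rewrite -(scale0r (0 : V)) bilinZr !scale0r. Qed.

Lemma bilinNl x z : B (- x) z = - B x z.
Proof. by rewrite -sub0r bilinBl bilin0l sub0r. Qed.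

Lemma bilinNr x z : B z (- x) = - B z x.
Proof. by rewrite -sub0r bilinBr bilin0r sub0r. Qed.

End Bilinear.

Section LinearAlgebra.
Variables (K : fieldType) (U W : lmodType K) (f g : U -> W).

Lemma linear_add : linear f -> linear g -> linear (fun x => f x + g x).
Proof. by move=> lin_f lin_g k x y; rewrite lin_f lin_g scalerDr addrACA. Qed.

Lemma linear_opp : linear f -> linear (fun x => - f x).
Proof. by move=> lin_f k x y; rewrite lin_f opprD scalerN. Qed.

End LinearAlgebra.

Lemma vspace_of_pred (K : fieldType) (V : vectType K) (P : V -> Prop) :
  P 0 -> (forall k x y, P x -> P y -> P (k *: x + y)) ->
  exists U : {vspace V}, forall z, z \in U <-> P z.
Proof.
move=> P0 P_lincomb.
suff /(_ 0%VS) : forall U : {vspace V}, (forall u, u \in U -> P u) ->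
    exists U' : {vspace V}, forall z, z \in U' <-> P z.
  by apply=> u; rewrite memv0 => /eqP ->.
move=> U; have [n] := ubnP (\dim {:V} - \dim U).
elim: n U => // n IHn U codimU UP.
case: (classic (exists2 z, P z & z \notin U)) => [[z Pz zU] | noz]; last first.
  exists U => z; split=> [|Pz]; first exact: UP.
  by case: (boolP (z \in U)) => // zU; case: noz; exists z.
apply: (IHn (U + <[z]>)%VS) => [|w /memv_addP [u uU [t /vlineP [k ->] ->]]].
  have: (\dim U < \dim (U + <[z]>))%N.
    rewrite (ltn_leqif (dimv_leqif_eq (addvSl U <[z]>))).
    by apply: contra zU => /eqP ->; apply: subvP (addvSr U _) _ (memv_line z).
  have := dimvS (subvf (U + <[z]>)%VS); lia.
by rewrite addrC; apply: P_lincomb => //; apply: UP.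
Qed.

Lemma lfun_eigenvector (K : closedFieldType) (V : vectType K) (phi : 'End(V)) :
  (0 < \dim {:V})%N -> exists a v, v != 0 /\ phi v = a *: v.
Proof.
move=> dimV; pose e := vbasis {:V}; pose A := passmx.mxof e e phi.
have /closed_rootP [a] : size (char_poly A) != 1%N by rewrite size_char_poly -lt0n.
rewrite -eigenvalue_root_char => /eigenvalueP [u uA u_neq0].
exists a, (passmx.vecof e u); split; first by rewrite passmx.vecof_eq0 // vbasisP.
rewrite (passmx.hom_vecof _ (vbasisP _)) uA.
exact: (GRing.scalable_linear (passmx.vecof_linear e)).
Qed.

Lemma eq0_coord (K : fieldType) (V : vectType K) (v : V) :
  (forall i, coord (vbasis fullv) i v = 0) -> v = 0.
Proof.
move=> v_coord0; rewrite (coord_vbasis (memvf v)).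
by apply: big1 => i _; rewrite v_coord0 scale0r.
Qed.

Lemma eq0_lincomb (K : fieldType) (V : vectType K) (k : K) (a b v : V) :
  a = b -> v - k *: (a - b) = 0 -> v = 0.
Proof. by move=> ->; rewrite subrr scaler0 subr0. Qed.
Arguments eq0_lincomb {K V} k {a b v}.

(* Most identities below are proved by certificates: starting from the goal
   [lhs - rhs = 0], each [apply: (eq0_lincomb k e)] subtracts [k] times the
   known identity [e]; the remainder vanishes after bilinear expansion,
   which [coord_ring] checks coordinatewise with [ring]. *)
Ltac coord_ring :=
  apply: eq0_coord => ?; rewrite ?(linearD, linearN, linearZ, linear0, linearB) /=; ring.
Ltac bilin_ring B :=
  cbv beta; rewrite ?(bilinDl B, bilinDr B, bilinNl B, bilinNr B,
                      bilinZl B, bilinZr B, bilin0l B, bilin0r B); coord_ring.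

Section LieAlgebra.
Variables (K : fieldType) (L : vectType K) (br : L -> L -> L).
Hypothesis lieL : lie_bracket br.
Hypothesis two_neq0 : (2%:R : K) != 0.

Let bilin_br : bilinear_map br. Proof. by case: lieL. Qed.

Lemma brxx x : br x x = 0. Proof. by case: lieL. Qed.

Lemma brC x y : br x y = - br y x.
Proof.
apply/eqP; rewrite -addr_eq0; apply/eqP.
have := brxx (x + y).
by rewrite (bilinDl bilin_br) !(bilinDr bilin_br) !brxx add0r addr0.
Qed.

Lemma br_leibniz a b c : br a (br b c) = br (br a b) c + br b (br a c).
Proof.
have [_ _ jacobi] := lieL.
apply: subr0_eq; apply: (eq0_lincomb 1 (jacobi a b c)).
apply: (eq0_lincomb (-1) (brC c (br a b))).
apply: (eq0_lincomb (-1) (congr1 (br b) (brC c a))).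
bilin_ring bilin_br.
Qed.

Lemma jacobi_cyclic a u v : br (br a u) v + br (br u v) a + br (br v a) u = 0.
Proof.
have [_ _ jacobi] := lieL.
by rewrite (brC (br a u)) (brC (br u v)) (brC (br v a)) -!opprD jacobi oppr0.
Qed.

Definition cyclic_null z := forall y u v,
  br (br z y) (br u v) + br (br z u) (br v y) + br (br z v) (br y u) = 0.

Lemma cyclic_null_lincomb k x y :
  cyclic_null x -> cyclic_null y -> cyclic_null (k *: x + y).
Proof.
move=> null_x null_y t u v; apply: subr0_eq.
apply: (eq0_lincomb k (null_x t u v)); apply: (eq0_lincomb 1 (null_y t u v)).
bilin_ring bilin_br.
Qed.

Lemma cyclic_null_br a z : cyclic_null z -> cyclic_null (br a z).
Proof.
move=> null_z y u v; apply: subr0_eq.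
apply: (eq0_lincomb (-1) (congr1 (br^~ (br v y)) (br_leibniz a z u))).
apply: (eq0_lincomb (-1) (congr1 (br^~ (br u v)) (br_leibniz a z y))).
apply: (eq0_lincomb (-1) (congr1 (br (br z v)) (br_leibniz a y u))).
apply: (eq0_lincomb (-1) (congr1 (br (br z y)) (br_leibniz a u v))).
apply: (eq0_lincomb 1 (congr1 (br a) (null_z y u v))).
apply: (eq0_lincomb (-1) (br_leibniz a (br z v) (br y u))).
apply: (eq0_lincomb (-1) (br_leibniz a (br z y) (br u v))).
apply: (eq0_lincomb (-1) (congr1 (br (br z u)) (br_leibniz a v y))).
apply: (eq0_lincomb (-1) (null_z (br a y) u v)).
apply: (eq0_lincomb (-1) (br_leibniz a (br z u) (br v y))).
apply: (eq0_lincomb (-1) (null_z (br a u) v y)).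
apply: (eq0_lincomb (-1) (null_z (br a v) y u)).
apply: (eq0_lincomb (-1) (congr1 (br^~ (br y u)) (br_leibniz a z v))).
bilin_ring bilin_br.
Qed.

Lemma cyclic_null_metabelian :
  (forall z, cyclic_null z) -> forall a b c e, br (br a b) (br c e) = 0.
Proof.
move=> null.
have null_sq y u v : br (br y u) (br y v) = 0.
  apply: subr0_eq; apply: (scalerI two_neq0); rewrite scaler0.
  apply: (eq0_lincomb (-1) (null y y u v)).
  apply: (eq0_lincomb 1 (congr1 (br^~ (br u v)) (brxx y))).
  apply: (eq0_lincomb 1 (congr1 (br (br y u)) (brC v y))).
  apply: (eq0_lincomb 1 (brC (br y v) (br y u))).
  bilin_ring bilin_br.
have null_polar y w u v : br (br y u) (br w v) + br (br w u) (br y v) = 0.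
  apply: subr0_eq.
  apply: (eq0_lincomb (-1) (null_sq y u v)).
  apply: (eq0_lincomb 1 (null_sq (y + w) u v)).
  apply: (eq0_lincomb (-1) (null_sq w u v)).
  bilin_ring bilin_br.
move=> a b c e; apply: subr0_eq; apply: (scalerI two_neq0); rewrite scaler0.
apply: (eq0_lincomb (-1) (null_polar e c a b)).
apply: (eq0_lincomb 1 (congr1 (br^~ (br c b)) (brC a e))).
apply: (eq0_lincomb (-1) (null_polar c a e b)).
apply: (eq0_lincomb 1 (brC (br a b) (br c e))).
apply: (eq0_lincomb 1 (congr1 (br (br c a)) (brC b e))).
apply: (eq0_lincomb (-1) (null_polar b c a e)).
apply: (eq0_lincomb 1 (congr1 (br^~ (br c e)) (brC a b))).
bilin_ring bilin_br.
Qed.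

Lemma biderivationD d e : biderivation br d -> biderivation br e ->
  biderivation br (fun x y => d x y + e x y).
Proof.
move=> [[dl dr] d1 d2] [[el er] e1 e2]; split.
- by split=> [y|x]; apply: linear_add.
- by move=> x y z; rewrite d1 e1 (bilinDr bilin_br) (bilinDl bilin_br) addrACA.
- by move=> x y z; rewrite d2 e2 (bilinDl bilin_br) (bilinDr bilin_br) addrACA.
Qed.

Lemma biderivationN d : biderivation br d -> biderivation br (fun x y => - d x y).
Proof.
move=> [[dl dr] d1 d2]; split.
- by split=> [y|x]; apply: linear_opp.
- by move=> x y z; rewrite d1 (bilinNr bilin_br) (bilinNl bilin_br) opprD.
- by move=> x y z; rewrite d2 (bilinNr bilin_br) (bilinNl bilin_br) opprD.
Qed.

Section Biderivation.
Variable d : L -> L -> L.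
Hypothesis bider_d : biderivation br d.

Let bilin_d : bilinear_map d. Proof. by case: bider_d. Qed.
Let bider_dl x y z : d (br x y) z = br x (d y z) + br (d x z) y.
Proof. by case: bider_d. Qed.
Let bider_dr x y z : d x (br y z) = br (d x y) z + br y (d x z).
Proof. by case: bider_d. Qed.

Lemma biderivation_transpose : biderivation br (fun x y => d y x).
Proof.
split; first by split=> [y|x]; [exact: bilin_d.2 | exact: bilin_d.1].
- by move=> x y z; rewrite bider_dr addrC.
- by move=> x y z; rewrite bider_dl addrC.
Qed.

Lemma biderivation_exchange x y u v :
  br (d x y) (br u v) + br (d u v) (br x y)
  = br (d x v) (br u y) + br (d u y) (br x v).
Proof.
apply: subr0_eq.
apply: (eq0_lincomb 1 (congr1 (br^~ u) (bider_dr x y v))).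
apply: (eq0_lincomb 1 (brC u (br (d x y) v))).
apply: (eq0_lincomb 1 (br_leibniz (d x y) u v)).
apply: (eq0_lincomb (-1) (congr1 (br^~ v) (bider_dl x u y))).
apply: (eq0_lincomb 1 (br_leibniz x (d u y) v)).
apply: (eq0_lincomb 1 (congr1 (br x) (bider_dr u y v))).
apply: (eq0_lincomb (-1) (congr1 (br y) (bider_dl x u v))).
apply: (eq0_lincomb 1 (br_leibniz x y (d u v))).
apply: (eq0_lincomb 1 (brC (d u v) (br x y))).
apply: (eq0_lincomb (-1) (bider_dr (br x u) y v)).
apply: (eq0_lincomb 1 (bider_dl x u (br y v))).
apply: (eq0_lincomb (-1) (br_leibniz y (d x v) u)).
apply: (eq0_lincomb (-1) (congr1 (br (d x v)) (brC u y))).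
bilin_ring bilin_br.
Qed.

Section Skew.
Hypothesis d_skew : forall x y, d x y = - d y x.

Lemma skew_biderivation_bracket x y u v :
  br (d x y) (br u v) = br (br x y) (d u v).
Proof.
apply: subr0_eq; apply: (scalerI two_neq0); rewrite scaler0.
apply: (eq0_lincomb 1 (congr1 (br^~ (br u v)) (d_skew x y))).
apply: (eq0_lincomb 1 (congr1 (br (d u v)) (brC x y))).
apply: (eq0_lincomb (-1) (biderivation_exchange y x u v)).
apply: (eq0_lincomb (-1) (congr1 (br^~ (br y v)) (d_skew u x))).
apply: (eq0_lincomb 1 (biderivation_exchange x y u v)).
apply: (eq0_lincomb (-1) (biderivation_exchange x v y u)).
apply: (eq0_lincomb 1 (congr1 (br^~ (br x v)) (d_skew u y))).
apply: (eq0_lincomb 1 (congr1 (br (d x v)) (brC u y))).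
apply: (eq0_lincomb (-1) (congr1 (br (d y v)) (brC u x))).
apply: (eq0_lincomb (- 2%:R) (brC (br x y) (d u v))).
bilin_ring bilin_br.
Qed.

Lemma skew_biderivation_cyclic a u v :
  d (br a u) v + d (br u v) a + d (br v a) u
  = 2%:R *: (br a (d u v) + br (d a v) u + br (d u a) v).
Proof.
apply: subr0_eq; rewrite !bider_dl (d_skew v a) (d_skew a u) (d_skew v u).
rewrite (brC u) (brC v) (brC _ a).
bilin_ring bilin_br.
Qed.

Lemma skew_biderivation_cyclic_br a u v p q :
  br (d (br a u) v + d (br u v) a + d (br v a) u) (br p q) = 0.
Proof.
rewrite !(bilinDl bilin_br) !skew_biderivation_bracket -!(bilinDl bilin_br).
by rewrite jacobi_cyclic (bilin0l bilin_br).
Qed.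

End Skew.

Section Symmetric.
Hypothesis d_sym : forall x y, d x y = d y x.

Lemma sym_biderivation_cyclic x y u v :
  br (d x y) (br u v) + br (d x u) (br v y) + br (d x v) (br y u) = 0.
Proof.
apply: subr0_eq; apply: (scalerI two_neq0); rewrite scaler0.
apply: (eq0_lincomb 1 (congr1 (br (d x y)) (brC u v))).
apply: (eq0_lincomb 1 (biderivation_exchange x u v y)).
apply: (eq0_lincomb (-1) (congr1 (br^~ (br x u)) (d_sym v y))).
apply: (eq0_lincomb 1 (congr1 (br (d x u)) (brC v y))).
apply: (eq0_lincomb 1 (biderivation_exchange x v y u)).
apply: (eq0_lincomb 1 (congr1 (br^~ (br x v)) (d_sym u y))).
apply: (eq0_lincomb (-1) (congr1 (br^~ (br x y)) (d_sym u v))).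
apply: (eq0_lincomb 1 (congr1 (br (d x v)) (brC y u))).
apply: (eq0_lincomb 1 (biderivation_exchange x y u v)).
bilin_ring bilin_br.
Qed.

Lemma sym_biderivation_cyclic_null x z : cyclic_null (d x z).
Proof.
move=> y u v; apply: subr0_eq.
apply: (eq0_lincomb 1 (sym_biderivation_cyclic x (br z u) v y)).
apply: (eq0_lincomb (-1) (congr1 (br z) (sym_biderivation_cyclic x y u v))).
apply: (eq0_lincomb 1 (br_leibniz z (d x v) (br y u))).
apply: (eq0_lincomb 1 (congr1 (br (d x v)) (br_leibniz z y u))).
apply: (eq0_lincomb 1 (br_leibniz z (d x u) (br v y))).
apply: (eq0_lincomb (-1) (congr1 (br^~ (br u v)) (bider_dr x z y))).
apply: (eq0_lincomb 1 (br_leibniz z (d x y) (br u v))).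
apply: (eq0_lincomb 1 (sym_biderivation_cyclic x (br z y) u v)).
apply: (eq0_lincomb 1 (congr1 (br (d x y)) (br_leibniz z u v))).
apply: (eq0_lincomb 1 (congr1 (br (d x u)) (br_leibniz z v y))).
apply: (eq0_lincomb (-1) (congr1 (br^~ (br v y)) (bider_dr x z u))).
apply: (eq0_lincomb 1 (sym_biderivation_cyclic x (br z v) y u)).
apply: (eq0_lincomb (-1) (congr1 (br^~ (br y u)) (bider_dr x z v))).
bilin_ring bilin_br.
Qed.

End Symmetric.
End Biderivation.
End LieAlgebra.

Section SimpleLieAlgebra.
Variables (K : fieldType) (L : vectType K) (br : L -> L -> L).
Hypothesis simpleL : simple_lie br.

Let lieL : lie_bracket br. Proof. by case: simpleL. Qed.
Let bilin_br : bilinear_map br. Proof. by case: lieL. Qed.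

Lemma simple_nonabelian : exists x y, br x y != 0.
Proof. by case: simpleL => _ []. Qed.

Lemma simple_dim_gt0 : (0 < \dim {:L})%N.
Proof.
have [x [y]] := simple_nonabelian; rewrite lt0n dimv_eq0; apply: contra => /eqP L0.
by have := memvf x; rewrite L0 memv0 => /eqP ->; rewrite (bilin0l bilin_br).
Qed.

Lemma simple_ideal_dichotomy (P : L -> Prop) :
  P 0 -> (forall k x y, P x -> P y -> P (k *: x + y)) ->
  (forall a z, P z -> P (br a z)) ->
  (forall z, P z) \/ (forall z, P z -> z = 0).
Proof.
move=> P0 P_lincomb P_br; have [U memU] := vspace_of_pred P0 P_lincomb.
have idealU : lie_ideal br U by move=> a z /memU Pz; apply/memU/P_br.
case: simpleL => _ [_ /(_ U idealU)] [] U_eq; [right | left] => z.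
- by move=> /memU; rewrite U_eq memv0 => /eqP.
- by apply/memU; rewrite U_eq memvf.
Qed.

Lemma simple_perfect (F : L -> L) :
  linear F -> (forall u v, F (br u v) = 0) -> forall w, F w = 0.
Proof.
move=> lin_F F_br; have := @simple_ideal_dichotomy (fun z => F z = 0); case.
- by rewrite -(subrr 0) (GRing.zmod_morphism_linear lin_F) !subrr.
- by move=> k x y Fx Fy; rewrite lin_F Fx Fy scaler0 addr0.
- by move=> a z _; apply: F_br.
- by [].
- move=> F_eq0; have [x [y]] := simple_nonabelian.
  by rewrite (F_eq0 _ (F_br x y)) eqxx.
Qed.

Lemma simple_centerless z : (forall y, br z y = 0) -> z = 0.
Proof.
move=> z_central; have := @simple_ideal_dichotomy (fun z => forall y, br z y = 0); case.
- by move=> y; rewrite (bilin0l bilin_br).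
- move=> k x y x_central y_central t.
  by rewrite (bilinDl bilin_br) (bilinZl bilin_br) x_central y_central scaler0 addr0.
- move=> a t t_central y.
  by have := br_leibniz lieL a t y; rewrite !t_central (bilin0r bilin_br) addr0.
- by move=> all_central; have [x [y]] := simple_nonabelian; rewrite all_central eqxx.
- by apply.
Qed.

Lemma simple_centroid_scalar (phi : 'End(L)) :
  (forall a z, phi (br a z) = br a (phi z)) ->
  (exists a v, v != 0 /\ phi v = a *: v) -> exists a, forall z, phi z = a *: z.
Proof.
move=> phi_br [a [v [v_neq0 phi_v]]]; exists a.
have := @simple_ideal_dichotomy (fun z => phi z = a *: z); case.
- by rewrite linear0 scaler0.
- by move=> k x y phi_x phi_y; rewrite linearP /= phi_x phi_y scalerDr !scalerA mulrC.
- by move=> b z phi_z; rewrite phi_br phi_z (bilinZr bilin_br).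
- by [].
- by move=> /(_ v phi_v) v0; rewrite v0 eqxx in v_neq0.
Qed.

Hypothesis two_neq0 : (2%:R : K) != 0.

Lemma simple_cyclic_null_eq0 z : cyclic_null br z -> z = 0.
Proof.
move=> null_z; have := @simple_ideal_dichotomy (cyclic_null br); case.
- by move=> y u v; rewrite !(bilin0l bilin_br) !addr0.
- exact: cyclic_null_lincomb.
- exact: cyclic_null_br.
- move=> all_null; exfalso.
  have derived_central a b : forall q, br (br a b) q = 0.
    apply: simple_perfect => [|c e]; first exact: bilin_br.2.
    exact: cyclic_null_metabelian.
  have abelian p q : br p q = 0.
    move: p; apply: (simple_perfect (F := br^~ q)); first exact: bilin_br.1.
    by move=> a b; apply: derived_central.
  by have [x [y]] := simple_nonabelian; rewrite abelian eqxx.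
- by apply.
Qed.

Lemma sym_biderivation_eq0 s : biderivation br s ->
  (forall x y, s x y = s y x) -> forall x y, s x y = 0.
Proof.
move=> bider_s s_sym x y; apply: simple_cyclic_null_eq0.
exact: sym_biderivation_cyclic_null.
Qed.

Section SkewBiderivation.
Variable g : L -> L -> L.
Hypotheses (bider_g : biderivation br g) (g_skew : forall x y, g x y = - g y x).

Let bider_gl x y z : g (br x y) z = br x (g y z) + br (g x z) y.
Proof. by case: bider_g. Qed.
Let bider_gr x y z : g x (br y z) = br (g x y) z + br y (g x z).
Proof. by case: bider_g. Qed.
Let g_bracket := skew_biderivation_bracket lieL two_neq0 bider_g g_skew.

Lemma skew_biderivation_ad a u v : g (br a u) v + g u (br a v) = br a (g u v).
Proof.
have cyclic0 : br a (g u v) + br (g a v) u + br (g u a) v = 0.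
  apply: (scalerI two_neq0); rewrite scaler0; apply: simple_centerless.
  rewrite -(skew_biderivation_cyclic lieL bider_g g_skew).
  apply: simple_perfect => [|p q]; first exact: bilin_br.2.
  exact: (skew_biderivation_cyclic_br lieL two_neq0 bider_g g_skew a u v p q).
apply: subr0_eq; apply: (eq0_lincomb 1 cyclic0).
apply: (eq0_lincomb 1 (bider_gl a u v)); apply: (eq0_lincomb 1 (bider_gr u a v)).
bilin_ring bilin_br.
Qed.

Definition centroid_rel z w := forall u v, br w (br u v) = br z (g u v).

Lemma centroid_rel_br a z w : centroid_rel z w -> centroid_rel (br a z) (br a w).
Proof.
move=> rel u v.
have -> : br (br a w) (br u v) = br a (br w (br u v)) - br w (br a (br u v)).
  by rewrite (br_leibniz lieL a w) addrK.
rewrite (br_leibniz lieL a u v) (bilinDr bilin_br) !rel -(bilinDr bilin_br).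
by rewrite skew_biderivation_ad (br_leibniz lieL a z) addrK.
Qed.

Lemma centroid_rel_uniq z w1 w2 : centroid_rel z w1 -> centroid_rel z w2 -> w1 = w2.
Proof.
move=> rel1 rel2; apply/subr0_eq/simple_centerless.
apply: simple_perfect => [|u v]; first exact: bilin_br.2.
by rewrite (bilinBl bilin_br) rel1 rel2 subrr.
Qed.

Lemma centroid_rel_exists z : exists w, centroid_rel z w.
Proof.
have := @simple_ideal_dichotomy (fun z => exists w, centroid_rel z w); case.
- by exists 0 => u v; rewrite !(bilin0l bilin_br).
- move=> k x y [wx relx] [wy rely]; exists (k *: wx + wy) => u v.
  by rewrite !(bilinDl bilin_br) !(bilinZl bilin_br) relx rely.
- by move=> a t [w rel]; exists (br a w); apply: centroid_rel_br.
- by [].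
- move=> rel_eq0; have [x [y]] := simple_nonabelian; rewrite (rel_eq0 (br x y)) ?eqxx //.
  by exists (g x y) => u v; apply: g_bracket.
Qed.

Definition centroid z :=
  sval (constructive_indefinite_description _ (centroid_rel_exists z)).

Lemma centroidP z : centroid_rel z (centroid z).
Proof. exact: svalP. Qed.

Lemma centroid_linear : linear centroid.
Proof.
move=> k x y; apply: (centroid_rel_uniq (centroidP _)) => u v.
by rewrite !(bilinDl bilin_br) !(bilinZl bilin_br) !centroidP.
Qed.

HB.instance Definition _ := GRing.isSemilinear.Build K L L *:%R centroid
  (GRing.semilinear_linear centroid_linear).

Lemma centroid_br a z : centroid (br a z) = br a (centroid z).
Proof. exact/(centroid_rel_uniq (centroidP _))/centroid_rel_br/centroidP. Qed.

Lemma centroid_bracket x y : centroid (br x y) = g x y.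
Proof.
by apply: (centroid_rel_uniq (centroidP _)) => u v; apply: g_bracket.
Qed.

Theorem skew_biderivation_centroid : exists phi : 'End(L),
  (forall a z, phi (br a z) = br a (phi z)) /\ forall x y, g x y = phi (br x y).
Proof.
exists (linfun centroid); split=> [a z | x y]; rewrite !lfunE /=.
  exact: centroid_br.
by rewrite centroid_bracket.
Qed.

End SkewBiderivation.
End SimpleLieAlgebra.

Section ClosedField.
Variables (K : closedFieldType) (L : vectType K) (br : L -> L -> L).
Hypotheses (simpleL : simple_lie br) (two_neq0 : (2%:R : K) != 0).

Let lieL : lie_bracket br. Proof. by case: simpleL. Qed.

Theorem simple_biderivation_scalar f :
  biderivation br f -> exists mu, forall x y, f x y = mu *: br x y.
Proof.
move=> bider_f; pose g x y := f x y - f y x; pose s x y := f x y + f y x.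
have bider_ft := biderivation_transpose bider_f.
have bider_g : biderivation br g :=
  biderivationD lieL bider_f (biderivationN lieL bider_ft).
have bider_s : biderivation br s := biderivationD lieL bider_f bider_ft.
have [phi [phi_br g_phi]] :=
  skew_biderivation_centroid simpleL two_neq0 bider_g (fun x y => esym (opprB _ _)).
have [lam phi_lam] :=
  simple_centroid_scalar simpleL phi_br (lfun_eigenvector phi (simple_dim_gt0 simpleL)).
have s0 := sym_biderivation_eq0 simpleL two_neq0 bider_s (fun x y => addrC _ _).
exists (lam / 2%:R) => x y; apply: (scalerI two_neq0).
have -> : 2%:R *: f x y = g x y + s x y.
  by rewrite /g /s addrACA addNr addr0 scaler_nat mulr2n.
by rewrite s0 addr0 g_phi phi_lam scalerA mulrC divfK.
Qed.

End ClosedField.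

Theorem lemma2p1 (R : realType) (L : vectType (complex R))
    (br : L -> L -> L) (f : L -> L -> L) :
  simple_lie br -> biderivation br f ->
  exists phi psi : L -> L,
    [/\ linear phi, linear psi &
        forall x y, f x y = br (phi x) y /\ f x y = br x (psi y)].
Proof.
move=> simpleL bider_f; have [[bilin_br _ _] _] := simpleL.
have two_neq0 : (2%:R : complex R) != 0 by rewrite pnatr_eq0.
have [mu f_mu] := simple_biderivation_scalar simpleL two_neq0 bider_f.
have lin_mu : linear ( *:%R mu : L -> L) by move=> k x y; rewrite scalerDr !scalerA mulrC.
exists ( *:%R mu), ( *:%R mu); split=> // x y.
by rewrite f_mu (bilinZl bilin_br) (bilinZr bilin_br).
Qed.
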